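(* For all integers $m\ge1$ and $j\ge0$, \[b_{\mathcal{G}}(m,m+j,1)=b_{\mathcal{G}}(m,m+j,\bar1)=q^{\binom{m+1}{2}+\binom{j+1}{2}}{m-1\brack j}.\]
   Context: An overpartition is a partition in which the first occurrence of each part size may be overlined, with parts listed in non-increasing order with respect to $1<\bar1<2<\bar2<\cdots$. A part is of size $t$ if it is $t$ or $\bar t$, and $|\pi|$ is the sum of the sizes of the parts. For $m\ge1$, $\mathcal{G}(m)$ is the set of overpartitions $(\pi_1,\dots,\pi_m)$ such that for every $1\le i<m$, if $\pi_{i+1}$ has size $t$ then $\pi_i\in\{\overline{t+1},\,t+2\}$. $b_{\mathcal{G}}(m,j,1)$ (resp. $b_{\mathcal{G}}(m,j,\bar1)$) is $\sum q^{|\pi|}$ over $\pi\in\mathcal{G}(m)$ whose largest part has size $j$ and whose smallest part is $1$ (resp. $\bar1$). The Gaussian binomial is ${M\brack N}=\frac{(q;q)_M}{(q;q)_N(q;q)_{M-N}}$ for $0\le N\le M$ and $0$ otherwise, where $(q;q)_n=\prod_{i=1}^n(1-q^i)$. *)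

From HB Require Import structures.
From mathcomp Require Import all_boot all_order all_algebra.
From mathcomp Require Import fraction.
Set Implicit Arguments. Unset Strict Implicit. Unset Printing Implicit Defensive.
Import Order.TTheory GRing.Theory Num.Theory.
Local Open Scope ring_scope.

(* A part of an overpartition: (size t, overlined?).  (t,false) is t,
   (t,true) is \bar t.  Ordering 1 < \bar1 < 2 < \bar2 < ... is by the key 2t+b. *)
Definition part := (nat * bool)%type.
Definition psize (p : part) : nat := p.1.
Definition pover (p : part) : bool := p.2.
Definition pkey (p : part) : nat := (2 * p.1 + p.2)%N.

Definition p0 : part := (0%N, false).

(* An overpartition, listed as (pi_1, ..., pi_k) in non-increasing order w.r.t.
   1 < \bar1 < 2 < \bar2 < ..., all sizes positive, and only the first occurrence
   of a part size may be overlined. *)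
Definition is_overpartition (s : seq part) : bool :=
  [&& all (fun p => 0 < psize p)%N s,
      sorted (fun x y => pkey y <= pkey x)%N s &
      all (fun i => pover (nth p0 s i) ==>
             all (fun k => psize (nth p0 s k) != psize (nth p0 s i)) (iota 0 i))
          (iota 0 (size s))].

Definition weight (s : seq part) : nat := sumn (map psize s).

Definition inG (m : nat) (s : seq part) : bool :=
  [&& is_overpartition s, size s == m &
      all (fun i => let t := psize (nth p0 s i.+1) in
                    (nth p0 s i == (t.+1, true)) || (nth p0 s i == (t.+2, false)))
          (iota 0 (size s).-1)].

Fixpoint seqs_of (A : seq part) (n : nat) : seq (seq part) :=
  if n is n'.+1 then [seq a :: s | a <- A, s <- seqs_of A n'] else [:: [::]].

Definition parts_upto (j : nat) : seq part :=
  [seq (t, b) | t <- iota 0 j.+1, b <- [:: false; true]].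

(* b_G(m, j, c): generating polynomial sum q^{|pi|} over pi in G(m) with largest
   part (pi_1) of size j and smallest part (pi_m) equal to c, where c = (1,false)
   is 1 and c = (1,true) is \bar 1.  Every part of such pi has size <= j, so the
   sum over sequences with entries in parts_upto j covers all of them. *)
Definition bG (m j : nat) (c : part) : {poly rat} :=
  \sum_(s <- seqs_of (parts_upto j) m |
         [&& inG m s, psize (nth p0 s 0) == j & last p0 s == c])
     'X^(weight s).

Notation RF := {fraction {poly rat}}.
Definition toRF (p : {poly rat}) : RF := FracField.tofrac p.

Definition qpoch (n : nat) : {poly rat} := \prod_(1 <= i < n.+1) (1 - 'X^i).

Definition gauss (M N : nat) : RF :=
  if (N <= M)%N then toRF (qpoch M) / toRF (qpoch N * qpoch (M - N)) else 0.

From HB Require Import structures.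
From mathcomp Require Import all_boot all_order all_algebra.
From mathcomp Require Import fraction zify ring.
Import Order.TTheory GRing.Theory Num.Theory.
Local Open Scope ring_scope.

(* Membership in G(m) only constrains consecutive parts: pi_i must be \bar(t+1) or t+2 when
   pi_(i+1) has size t.  Such chains have strictly decreasing sizes, so the overpartition
   conditions hold automatically and G(m) is simply the set of stepR-chains of m positive
   parts.  Writing S J c n t for the generating polynomial of chains of length n with largest
   size t and smallest part c (parts of size at most J), removing the largest part gives the
   recursion  S(n+2, t+2) = q^(t+2) (S(n+1, t+1) + S(n+1, t)),  with S(1, t) = [t = 1] q and
   S(n, t) = 0 for t < n.  This is the q-Pascal recursion of the Gaussian binomials, so by
   induction S(k+1, k+1+j) = q^(C(k+2,2)+C(j+1,2)) [k, j], where [k, j] is the polynomial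
   defined by q-Pascal; finally [M, N] (q;q)_N (q;q)_(M-N) = (q;q)_M identifies it with the
   quotient of q-Pochhammer symbols used in the statement. *)

Definition stepR (x y : part) : bool :=
  (x == (y.1.+1, true)) || (x == (y.1.+2, false)).

Lemma stepR_lt x y : stepR x y -> (y.1 < x.1)%N.
Proof. by case/orP=> /eqP ->. Qed.

Lemma chain_sorted (s : seq part) :
  all (fun i => let t := psize (nth p0 s i.+1) in
                    (nth p0 s i == (t.+1, true)) || (nth p0 s i == (t.+2, false)))
          (iota 0 (size s).-1) = sorted stepR s.
Proof.
elim: s => [//|x [//|y s] IH].
move: IH; rewrite /= => <-.
by rewrite -[1%N]addn0 iotaDl all_map.
Qed.

(* Along a chain with strictly decreasing sizes the overpartition conditions are automatic:
   the order is respected and no size repeats, so overlining is never an issue. *)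
Lemma chain_is_overpartition s :
  all (fun p => 0 < psize p)%N s -> sorted stepR s -> is_overpartition s.
Proof.
move=> pos chain; have decr : sorted (fun x y : part => (y.1 < x.1)%N) s.
  by apply: sub_sorted chain => x y /stepR_lt.
rewrite /is_overpartition pos /=; apply/andP; split.
  apply: sub_sorted decr => -[a b] [c d] /= lt_ca; rewrite /pkey /=.
  by case: b; case: d; lia.
apply/allP => i; rewrite mem_iota add0n => /andP[_ lt_i]; apply/implyP => _.
apply/allP => k; rewrite mem_iota add0n => /andP[_ lt_ki].
have trans : transitive (fun x y : part => (y.1 < x.1)%N).
  by move=> a b c /= H1 H2; apply: ltn_trans H1.
have lt_sizes := sorted_ltn_nth trans p0 decr k i.
by rewrite /psize neq_ltn lt_sizes ?orbT // inE (ltn_trans lt_ki).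
Qed.

Lemma inGE m s :
  inG m s = [&& all (fun p => 0 < psize p)%N s, sorted stepR s & size s == m].
Proof.
rewrite /inG chain_sorted.
have [pos|npos] := boolP (all _ s); last by rewrite /is_overpartition (negbTE npos).
have [chain|] := boolP (sorted stepR s); last by rewrite !andbF.
by rewrite chain_is_overpartition //= andbT.
Qed.

Lemma inG_cons n a y u : inG n.+2 (a :: y :: u) = stepR a y && inG n.+1 (y :: u).
Proof.
rewrite !inGE /= -!andbA; case: (boolP (stepR a y)) => [ay|_]; last by rewrite !andbF.
by rewrite (leq_ltn_trans _ (stepR_lt _ _ ay)).
Qed.

Lemma chain_head_ge s :
  all (fun p => 0 < psize p)%N s -> sorted stepR s -> (size s <= psize (nth p0 s 0))%N.
Proof.
elim: s => [//|x [|y u] IH] /= /andP[x_pos pos]; first by rewrite x_pos.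
case/andP=> xy chain; apply: leq_ltn_trans (IH pos chain) _; exact: stepR_lt.
Qed.

Lemma seqs_ofS A n : seqs_of A n.+1 = [seq a :: s | a <- A, s <- seqs_of A n].
Proof. by []. Qed.

Lemma seqs_of_size A n s : s \in seqs_of A n -> size s = n.
Proof.
elim: n s => [|n IH] s /=; first by rewrite inE => /eqP ->.
by case/allpairsP=> [[a u] [_ /= Hu ->]] /=; rewrite (IH _ Hu).
Qed.

Lemma mem_parts_upto J t b : ((t, b) \in parts_upto J) = (t <= J)%N.
Proof.
apply/idP/idP.
  case/allpairsP=> [[a c] [/= Ha _ [-> _]]].
  by move: Ha; rewrite -/(iota 0 J.+1) mem_iota add0n ltnS.
move=> tJ; apply: (allpairs_f (fun t b => (t, b))); first by rewrite mem_iota add0n ltnS.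
by case: b.
Qed.

Lemma uniq_parts_upto J : uniq (parts_upto J).
Proof.
apply: allpairs_uniq; [exact: iota_uniq | by [] |].
by move=> [a b] [c d] _ _ /=.
Qed.

Lemma sum_pick (T : eqType) (A : seq T) (p : T) (K : {poly rat}) :
  uniq A -> \sum_(a <- A) (if a == p then K else 0) = if p \in A then K else 0.
Proof.
move=> uA; have [pA|pA] := boolP (p \in A).
  by rewrite (bigD1_seq p) //= eqxx big1 ?addr0 // => a /negbTE ->.
rewrite big_seq big1 // => a aA; case: eqP => // ap.
by rewrite -ap aA in pA.
Qed.

Lemma step_sum J y t : (t <= J)%N ->
  \sum_(a <- parts_upto J | stepR a y && (psize a == t)) 'X^(psize a)
    = (if y.1.+1 == t then 'X^t else 0) + (if y.1.+2 == t then 'X^t else 0) :> {poly rat}.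
Proof.
move=> tJ; rewrite big_mkcond /=.
pose K1 : {poly rat} := if y.1.+1 == t then 'X^t else 0.
pose K2 : {poly rat} := if y.1.+2 == t then 'X^t else 0.
rewrite (eq_bigr (fun a => (if a == (y.1.+1, true) then K1 else 0)
                         + (if a == (y.1.+2, false) then K2 else 0))); last first.
  move=> a _; rewrite /stepR /K1 /K2.
  case: (a =P (y.1.+1, true)) => [->|_].
    by rewrite xpair_eqE andbF addr0 /=; case: (y.1.+1 =P t) => [->|].
  rewrite add0r /=; case: (a =P (y.1.+2, false)) => [->|_] //=.
  by case: (y.1.+2 =P t) => [->|].
rewrite big_split /= !sum_pick ?uniq_parts_upto // !mem_parts_upto.
have in1 : y.1.+1 == t -> (y.1.+1 <= J)%N by move/eqP->.
have in2 : y.1.+2 == t -> (y.1.+2 <= J)%N by move/eqP->.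
rewrite /K1 /K2; case E1: (y.1.+1 == t); case E2: (y.1.+2 == t);
  by rewrite ?if_same ?(in1 E1) ?(in2 E2).
Qed.

Definition S (J : nat) (c : part) (n t : nat) : {poly rat} :=
  \sum_(s <- seqs_of (parts_upto J) n |
         [&& inG n s, psize (nth p0 s 0) == t & last p0 s == c])
     'X^(weight s).

Lemma bG_S m j c : bG m j c = S j c m j.
Proof. by []. Qed.

Lemma extend_tail J c n t y u : (t.+2 <= J)%N ->
  \sum_(a <- parts_upto J)
     (if [&& inG n.+2 (a :: y :: u), psize a == t.+2 & last y u == c]
      then 'X^(weight (a :: y :: u)) else 0)
  = 'X^(t.+2) * ((if [&& inG n.+1 (y :: u), y.1 == t.+1 & last y u == c]
                then 'X^(weight (y :: u)) else 0)
             + (if [&& inG n.+1 (y :: u), y.1 == t & last y u == c]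
                then 'X^(weight (y :: u)) else 0)) :> {poly rat}.
Proof.
move=> tJ; set ok := inG n.+1 (y :: u) && (last y u == c).
pose Q : {poly rat} := if ok then 'X^(weight (y :: u)) else 0.
rewrite (eq_bigr (fun a => (if stepR a y && (psize a == t.+2) then 'X^(psize a) else 0) * Q));
  last first.
  move=> a _; rewrite inG_cons /Q /ok (_ : weight _ = a.1 + weight (y :: u))%N // exprD.
  by case: (stepR a y); case: (inG _ _); case: (psize a == t.+2); case: (last y u == c);
    rewrite /= ?mul0r ?mulr0.
rewrite -mulr_suml -big_mkcond step_sum // !eqSS /Q /ok.
by case: (y.1 == t.+1); case: (y.1 == t); case: (inG _ _); case: (last y u == c);
  rewrite /=; ring.
Qed.

(* Removing the largest part of size t+2 leaves a member of G(n+1) with largest part of size t+1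
   (the removed part was \bar(t+2)) or of size t (it was t+2). *)
Lemma S_rec J c n t : (t.+2 <= J)%N ->
  S J c n.+2 t.+2 = 'X^(t.+2) * (S J c n.+1 t.+1 + S J c n.+1 t).
Proof.
move=> tJ; rewrite /S seqs_ofS big_mkcond big_allpairs_dep exchange_big.
rewrite !(big_mkcond (fun s => [&& inG n.+1 s, _ & _])) -big_split mulr_sumr.
apply: eq_big_seq => -[|y u] /seqs_of_size // _.
exact: extend_tail.
Qed.

Lemma S_one J c t : (0 < c.1 <= J)%N -> S J c 1 t = if c.1 == t then 'X^(c.1) else 0.
Proof.
case: c => k b /= /andP[k_pos kJ]; rewrite /S seqs_ofS big_mkcond big_allpairs_dep.
rewrite (eq_bigr (fun a => if a == (k, b) then (if k == t then 'X^k else 0) else 0)).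
  by rewrite sum_pick ?uniq_parts_upto // mem_parts_upto kJ.
move=> a _; rewrite big_seq1 inGE /= andbT.
case: (a =P (k, b)) => [->|_]; last by rewrite !andbF.
by rewrite /= k_pos andbT /weight /= addn0.
Qed.

Lemma S_zero J c n t : (t < n)%N -> S J c n t = 0.
Proof.
move=> tn; rewrite /S big1 // => s /and3P[sG /eqP st _].
move: sG; rewrite inGE => /and3P[pos chain /eqP sn].
by have := chain_head_ge s pos chain; rewrite sn st leqNgt tn.
Qed.

(* The Gaussian binomial as a polynomial, via the q-Pascal rule
   [M+1, N+1] = q^(N+1) [M, N+1] + [M, N]. *)
Fixpoint qbin (M N : nat) : {poly rat} :=
  match M, N with
  | _, 0 => 1
  | 0, _.+1 => 0
  | M'.+1, N'.+1 => 'X^N * qbin M' N + qbin M' N'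
  end.

Lemma qbin0 M : qbin M 0 = 1. Proof. by case: M. Qed.

Lemma qbin_gt M N : (M < N)%N -> qbin M N = 0.
Proof.
elim: M N => [|M IH] [|N] //= ltMN.
by rewrite !IH ?mulr0 ?addr0 // ltnW.
Qed.

Lemma S_closed J b k j : (k + j < J)%N ->
  S J (1%N, b) k.+1 (k + j).+1 = 'X^('C(k.+2, 2) + 'C(j.+1, 2)) * qbin k j.
Proof.
elim: k j => [|k IH] j kjJ.
  rewrite S_one; last by case: J kjJ.
  by case: j {kjJ} => [|j]; rewrite add0n /= ?mulr1 ?mulr0.
rewrite addSn S_rec // IH; last by rewrite ltnW.
case: j kjJ => [|j] kjJ.
  rewrite addn0 S_zero // addr0 !qbin0 !mulr1 -exprD (binS k.+2 1) bin1.
  by congr ('X^_); lia.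
rewrite addnS IH; last by lia.
rewrite /= !mulrDr !mulrA -!exprD (binS k.+2 1) bin1 (binS j.+1 1) bin1.
by congr ('X^_ * _ + 'X^_ * _); lia.
Qed.

Lemma qpoch0 : qpoch 0 = 1.
Proof. by rewrite /qpoch big_geq. Qed.

Lemma qpochS n : qpoch n.+1 = qpoch n * (1 - 'X^(n.+1)).
Proof. by rewrite /qpoch big_nat_recr. Qed.

(* (q;q)_n is a nonzero polynomial: its constant term is 1. *)
Lemma qpoch_neq0 n : qpoch n != 0.
Proof.
elim: n => [|n IH]; first by rewrite qpoch0 oner_eq0.
rewrite qpochS mulf_neq0 //; apply/eqP => /(congr1 (horner^~ 0)).
by rewrite !hornerE expr0n /= subr0 => /eqP; rewrite oner_eq0.
Qed.

Lemma qbin_prod M N : (N <= M)%N -> qbin M N * (qpoch N * qpoch (M - N)) = qpoch M.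
Proof.
elim: M N => [|M IH] [|N] //= leNM.
- by rewrite qpoch0 !mul1r.
- by rewrite qpoch0 subn0 !mul1r.
rewrite subSS; have [ltNM|geNM] := ltnP N M; last first.
  have eNM : N = M by apply/eqP; rewrite eqn_leq geNM -ltnS leNM.
  have := IH M (leqnn M); rewrite subnn qpoch0 mulr1 => IHM.
  by rewrite eNM qbin_gt // mulr0 add0r subnn qpoch0 mulr1 qpochS mulrA IHM.
pose d := (M - N.+1)%N.
have IH1 : qbin M N.+1 * (qpoch N.+1 * qpoch d) = qpoch M := IH N.+1 ltNM.
have IH2 : qbin M N * (qpoch N * qpoch d.+1) = qpoch M.
  by rewrite /d subnSK //; exact: IH N (ltnW ltNM).
have XM : 'X^(M.+1) = 'X^(N.+1) * 'X^(d.+1) :> {poly rat} by rewrite -exprD; congr ('X^_); lia.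
rewrite qpochS in IH1; rewrite qpochS in IH2.
rewrite -(subnSK ltNM) -/d !qpochS XM.
set x := 'X^(N.+1) in IH1 IH2 *; set y := 'X^(d.+1) in IH1 IH2 *.
have -> : qpoch M * (1 - x * y) = x * (1 - y) * qpoch M + (1 - x) * qpoch M by ring.
by rewrite -{1}IH1 -IH2; ring.
Qed.

Lemma qbin_gauss M N : toRF (qbin M N) = gauss M N.
Proof.
rewrite /gauss; case: leqP => leNM; last by rewrite qbin_gt // /toRF tofrac0.
rewrite -(qbin_prod _ _ leNM) /toRF tofracM mulfK //.
by rewrite tofrac_eq0 mulf_neq0 // qpoch_neq0.
Qed.

Theorem mainTheorem16 (m j : nat) : (1 <= m)%N ->
  toRF (bG m (m + j) (1%N, false))
    = toRF ('X^('C(m.+1, 2) + 'C(j.+1, 2))) * gauss (m - 1) j /\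
  toRF (bG m (m + j) (1%N, true))
    = toRF ('X^('C(m.+1, 2) + 'C(j.+1, 2))) * gauss (m - 1) j.
Proof.
case: m => [//|k] _.
have closed b : bG k.+1 (k.+1 + j) (1%N, b) = 'X^('C(k.+2, 2) + 'C(j.+1, 2)) * qbin k j.
  by rewrite bG_S addSn S_closed.
by rewrite !closed subn1 -qbin_gauss /toRF !tofracM.
Qed.
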